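(* Let $n\ge2$ and $G=\mathbb{R}^n\setminus\overline{\mathbb{B}^n}$, where $\mathbb{B}^n$ is the open unit ball. Then $G$ is uniform and \[ \frac{\pi}{\log3}\le A_G\le\frac{4\pi}{\log3}. \]
   Context: For a domain $G\subsetneq\mathbb{R}^n$ let $d_G(x)=d(x,\partial G)$; $k_G(x,y)=\inf_\gamma\int_\gamma\frac{|dx|}{d_G(x)}$ over rectifiable curves $\gamma\subset G$ joining $x,y$ (quasihyperbolic distance); $j_G(x,y)=\log\left(1+\frac{|x-y|}{\min\{d_G(x),d_G(y)\}}\right)$; the uniformity constant is $A_G=\inf\{A\ge1: k_G\le A\,j_G\text{ on }G\times G\}$ (with $\inf\emptyset=+\infty$), and $G$ is uniform if $A_G<\infty$. *)

From Stdlib Require Import Reals Lra Classical ClassicalEpsilon.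
Open Scope R_scope.

(* Points of R^n are represented as functions nat -> R; only the first n
   coordinates x 0, ..., x (n-1) are ever used (norm / distance below). *)
Definition Rn := nat -> R.

Fixpoint sumsq (n : nat) (x : Rn) : R :=
  match n with
  | O => 0
  | S m => sumsq m x + (x m) ^ 2
  end.

Definition norm (n : nat) (x : Rn) : R := sqrt (sumsq n x).
Definition dist (n : nat) (x y : Rn) : R := norm n (fun i => x i - y i).

(* Infimum of a set of reals (meaningful when nonempty and bounded below;
   default value 0 otherwise). *)
Lemma Inf_bound (E : R -> Prop) :
  (exists m, forall x, E x -> m <= x) -> bound (fun y => E (- y)).
Proof.
  intros [m Hm]. exists (- m). intros y Hy. specialize (Hm _ Hy). lra.
Qed.

Lemma Inf_ne (E : R -> Prop) : (exists x, E x) -> exists y, E (- y).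
Proof.
  intros [x Hx]. exists (- x). rewrite Ropp_involutive. exact Hx.
Qed.

Definition Inf (E : R -> Prop) : R :=
  match excluded_middle_informative
          ((exists m, forall x, E x -> m <= x) /\ (exists x, E x)) with
  | left H =>
      - proj1_sig (completeness (fun y => E (- y))
                     (Inf_bound E (proj1 H)) (Inf_ne E (proj2 H)))
  | right _ => 0
  end.

Definition closure_pt (n : nat) (G : Rn -> Prop) (z : Rn) : Prop :=
  forall eps, 0 < eps -> exists w, G w /\ dist n w z < eps.
Definition interior_pt (n : nat) (G : Rn -> Prop) (z : Rn) : Prop :=
  exists eps, 0 < eps /\ forall w, dist n w z < eps -> G w.
Definition boundary_pt (n : nat) (G : Rn -> Prop) (z : Rn) : Prop :=
  closure_pt n G z /\ ~ interior_pt n G z.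

Definition dG (n : nat) (G : Rn -> Prop) (x : Rn) : R :=
  Inf (fun r => exists z, boundary_pt n G z /\ r = dist n x z).

(* Quasihyperbolic distance: infimum of  int_gamma |dx| / d_G(x)  over
   rectifiable curves in G joining x and y.  Rectifiable curves are taken
   in arc-length-type parametrization: gamma : [0,L] -> G 1-Lipschitz,
   and the integral is  int_0^L ds / d_G(gamma s)  (Riemann integral). *)
Definition kG (n : nat) (G : Rn -> Prop) (x y : Rn) : R :=
  Inf (fun v => exists (L : R) (gam : R -> Rn),
         0 <= L /\ gam 0 = x /\ gam L = y /\
         (forall s t, 0 <= s <= L -> 0 <= t <= L ->
            dist n (gam s) (gam t) <= Rabs (s - t)) /\
         (forall s, 0 <= s <= L -> G (gam s)) /\
         exists pr : Riemann_integrable (fun s => / dG n G (gam s)) 0 L,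
           v = RiemannInt pr).

Definition jG (n : nat) (G : Rn -> Prop) (x y : Rn) : R :=
  ln (1 + dist n x y / Rmin (dG n G x) (dG n G y)).

Definition unif_const (n : nat) (G : Rn -> Prop) (A : R) : Prop :=
  1 <= A /\ forall x y, G x -> G y -> kG n G x y <= A * jG n G x y.

Definition uniform (n : nat) (G : Rn -> Prop) : Prop :=
  exists A, unif_const n G A.

(* A_G (only meaningful when G is uniform; inf of the empty set = +oo
   is not represented, uniformity is asserted separately). *)
Definition AG (n : nat) (G : Rn -> Prop) : R := Inf (unif_const n G).

Definition ext_ball (n : nat) : Rn -> Prop := fun x => 1 < norm n x.

(* Upper bound: two points of the exterior are joined either by their segment, when
   |x - y| is small compared with their distance to the sphere, or by a path that runs
   radially out to a larger sphere |z| = R, follows one or two chords of that sphere and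
   runs radially back.  The quasihyperbolic length of every piece is computed or bounded
   explicitly, which gives k_G <= 11.3 j_G <= (4 pi / ln 3) j_G.

   Lower bound: along a path in G the angle seen from the origin grows at most like
   |dx| / |x| <= |dx| / d_G(x), so k_G(x, y) is at least the angle between x and y.  For the
   antipodal points +-r e_1 this angle is pi, while j_G = ln (1 + 2r / (r - 1)) tends to
   ln 3 as r grows. *)

From Coquelicot Require Import Coquelicot.
From Stdlib Require Import Reals Lra Lia Machin.
From Stdlib Require Import FunctionalExtensionality PropExtensionality ClassicalEpsilon.
(* Imported after Coquelicot, so that [norm] and [dist] are the Euclidean ones of [Defs]. *)
From Pilot Require Import Defs.
Open Scope R_scope.

(** * Euclidean geometry of [Rn] *)

Fixpoint inner (n : nat) (x y : Rn) : R :=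
  match n with O => 0 | S m => inner m x y + x m * y m end.

Definition scale (c : R) (x : Rn) : Rn := fun i => c * x i.

Definition lerp (u v : Rn) (t : R) : Rn := fun i => u i + t * (v i - u i).

Lemma sumsq_inner n x : sumsq n x = inner n x x.
Proof. induction n; simpl; [reflexivity | rewrite IHn; ring]. Qed.

Lemma inner_sym n x y : inner n x y = inner n y x.
Proof. induction n; simpl; [reflexivity | rewrite IHn; ring]. Qed.

Lemma inner_combl n a b x y z :
  inner n (fun i => a * x i + b * y i) z = a * inner n x z + b * inner n y z.
Proof. induction n; simpl; [ring | rewrite IHn; ring]. Qed.

Lemma inner_combr n a b x y z :
  inner n z (fun i => a * x i + b * y i) = a * inner n z x + b * inner n z y.
Proof. rewrite inner_sym, inner_combl, !(inner_sym n z). reflexivity. Qed.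

Lemma inner_scale_l n a x y : inner n (scale a x) y = a * inner n x y.
Proof. unfold scale. induction n; simpl; [ring | rewrite IHn; ring]. Qed.

Lemma inner_scale_r n a x y : inner n x (scale a y) = a * inner n x y.
Proof. unfold scale. induction n; simpl; [ring | rewrite IHn; ring]. Qed.

Lemma inner_ge0 n x : 0 <= inner n x x.
Proof. induction n; simpl; nra. Qed.

Lemma inner_sq_le n x y : inner n x y ^ 2 <= inner n x x * inner n y y.
Proof.
  induction n as [|m IH]; simpl; [lra|].
  pose proof (inner_ge0 m x); pose proof (inner_ge0 m y).
  set (A := inner m x y) in *; set (X := inner m x x) in *; set (Y := inner m y y) in *.
  set (a := x m); set (b := y m).
  assert (Hsq : (2 * A * a * b) ^ 2 <= (X * b ^ 2 + Y * a ^ 2) ^ 2).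
  { assert (0 <= (X * b ^ 2 - Y * a ^ 2) ^ 2) by apply pow2_ge_0.
    assert (A ^ 2 * (a ^ 2 * b ^ 2) <= X * Y * (a ^ 2 * b ^ 2)) by
      (apply Rmult_le_compat_r; [nra | exact IH]).
    nra. }
  assert (0 <= X * b ^ 2 + Y * a ^ 2) by nra.
  assert (2 * A * a * b <= X * b ^ 2 + Y * a ^ 2)
    by (destruct (Rle_dec (2 * A * a * b) 0); nra).
  nra.
Qed.

Lemma norm_sq n x : norm n x ^ 2 = inner n x x.
Proof.
  unfold norm. rewrite sumsq_inner, <- Rsqr_pow2. apply Rsqr_sqrt, inner_ge0.
Qed.

Lemma norm_ge0 n x : 0 <= norm n x.
Proof. apply sqrt_pos. Qed.

Lemma norm_eq_of_sq n x r : 0 <= r -> r ^ 2 = inner n x x -> norm n x = r.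
Proof.
  intros Hr Hsq. pose proof (norm_sq n x); pose proof (norm_ge0 n x).
  apply Rsqr_inj; [assumption | assumption |]. rewrite !Rsqr_pow2. congruence.
Qed.

Lemma norm_le_of_sq n x r : 0 <= r -> inner n x x <= r ^ 2 -> norm n x <= r.
Proof.
  intros Hr Hsq. pose proof (norm_sq n x); pose proof (norm_ge0 n x).
  destruct (Rle_dec (norm n x) r); [assumption | nra].
Qed.

Lemma norm_ge_of_sq n x r : 0 <= r -> r ^ 2 <= inner n x x -> r <= norm n x.
Proof.
  intros Hr Hsq. pose proof (norm_sq n x); pose proof (norm_ge0 n x).
  destruct (Rle_dec r (norm n x)); [assumption | nra].
Qed.

Lemma Rabs_inner_le n x y : Rabs (inner n x y) <= norm n x * norm n y.
Proof.
  pose proof (norm_sq n x); pose proof (norm_sq n y); pose proof (inner_sq_le n x y).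
  pose proof (norm_ge0 n x); pose proof (norm_ge0 n y).
  apply Rsqr_incr_0; [| apply Rabs_pos | nra].
  rewrite <- Rsqr_abs, Rsqr_mult, !Rsqr_pow2. nra.
Qed.

Lemma inner_le_norm n x y : inner n x y <= norm n x * norm n y.
Proof. eapply Rle_trans; [apply Rle_abs | apply Rabs_inner_le]. Qed.

Lemma norm_inner_ge n x y : - (norm n x * norm n y) <= inner n x y.
Proof. pose proof (Rabs_inner_le n x y); pose proof (Rabs_maj2 (inner n x y)); lra. Qed.

Lemma norm_scale n c x : norm n (scale c x) = Rabs c * norm n x.
Proof.
  apply norm_eq_of_sq; [apply Rmult_le_pos; [apply Rabs_pos | apply norm_ge0] |].
  replace (scale c x) with (fun i => c * x i + 0 * x i)
    by (unfold scale; extensionality i; ring).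
  rewrite inner_combl, !inner_combr, <- norm_sq, Rpow_mult_distr, pow2_abs. ring.
Qed.

Lemma norm_scale_pos n c x : 0 <= c -> norm n (scale c x) = c * norm n x.
Proof. intros Hc. rewrite norm_scale, Rabs_pos_eq; auto. Qed.

Lemma norm_add_le n x y : norm n (fun i => x i + y i) <= norm n x + norm n y.
Proof.
  pose proof (norm_ge0 n x); pose proof (norm_ge0 n y).
  apply norm_le_of_sq; [lra |].
  replace (fun i => x i + y i) with (fun i => 1 * x i + 1 * y i)
    by (extensionality i; ring).
  rewrite inner_combl, !inner_combr, (inner_sym n y x), <- !norm_sq.
  pose proof (inner_le_norm n x y). nra.
Qed.

Lemma inner_unit n p : norm n p = 1 -> inner n p p = 1.
Proof. intros Hp. rewrite <- norm_sq, Hp. ring. Qed.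

Lemma dist_sym n x y : dist n x y = dist n y x.
Proof.
  unfold dist. replace (fun i => y i - x i) with (scale (-1) (fun i => x i - y i))
    by (unfold scale; extensionality i; ring).
  rewrite norm_scale, Rabs_m1. ring.
Qed.

Lemma dist_triangle n x y z : dist n x z <= dist n x y + dist n y z.
Proof.
  unfold dist. replace (fun i => x i - z i) with (fun i => (x i - y i) + (y i - z i))
    by (extensionality i; ring).
  apply norm_add_le.
Qed.

Lemma norm_sub_le_dist n x y : norm n x - norm n y <= dist n x y.
Proof.
  unfold dist. pose proof (norm_add_le n (fun i => x i - y i) y) as H.
  assert (E : (fun i => x i - y i + y i) = x) by (extensionality i; ring).
  cbv beta in H. rewrite E in H. lra.
Qed.

Lemma Rabs_norm_sub_le_dist n x y : Rabs (norm n x - norm n y) <= dist n x y.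
Proof.
  pose proof (norm_sub_le_dist n x y); pose proof (norm_sub_le_dist n y x).
  rewrite dist_sym in H0. apply Rabs_le; lra.
Qed.

Lemma dist_sq n x y : dist n x y ^ 2 = norm n x ^ 2 + norm n y ^ 2 - 2 * inner n x y.
Proof.
  unfold dist. rewrite !norm_sq.
  replace (fun i => x i - y i) with (fun i => 1 * x i + (-1) * y i)
    by (extensionality i; ring).
  rewrite inner_combl, !inner_combr, (inner_sym n y x). ring.
Qed.

Lemma dist_lerp n u v s t : dist n (lerp u v s) (lerp u v t) = Rabs (s - t) * dist n u v.
Proof.
  rewrite (dist_sym n u v). unfold dist. rewrite <- norm_scale. f_equal.
  unfold lerp, scale. extensionality i. ring.
Qed.

Lemma lerp_0 u v : lerp u v 0 = u.
Proof. unfold lerp. extensionality i. ring. Qed.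

Lemma lerp_1 u v : lerp u v 1 = v.
Proof. unfold lerp. extensionality i. ring. Qed.

Lemma norm_lerp_ge n x y t : 0 <= t <= 1 ->
  Rmin (norm n x) (norm n y) - dist n x y / 2 <= norm n (lerp x y t).
Proof.
  intros Ht.
  pose proof (dist_lerp n x y 0 t) as D0. pose proof (dist_lerp n x y 1 t) as D1.
  rewrite lerp_0 in D0. rewrite lerp_1 in D1.
  rewrite Rabs_left1 in D0 by lra. rewrite Rabs_pos_eq in D1 by lra.
  pose proof (norm_sub_le_dist n x (lerp x y t)); pose proof (norm_sub_le_dist n y (lerp x y t)).
  pose proof (norm_ge0 n (fun i => x i - y i)). fold (dist n x y) in *.
  pose proof (Rmin_l (norm n x) (norm n y)); pose proof (Rmin_r (norm n x) (norm n y)).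
  destruct (Rle_dec t (1 / 2)).
  - assert (t * dist n x y <= 1 / 2 * dist n x y) by (apply Rmult_le_compat_r; lra). lra.
  - assert ((1 - t) * dist n x y <= 1 / 2 * dist n x y) by (apply Rmult_le_compat_r; lra). lra.
Qed.

Definition unit_dir n (x : Rn) : Rn := scale (/ norm n x) x.

Lemma norm_unit_dir n x : 0 < norm n x -> norm n (unit_dir n x) = 1.
Proof.
  intros Hx. unfold unit_dir. rewrite norm_scale_pos; [field; lra |].
  left; apply Rinv_0_lt_compat; exact Hx.
Qed.

Lemma scale_unit_dir n x R : 0 < norm n x -> scale R (unit_dir n x) = scale (R / norm n x) x.
Proof. intros Hx. unfold unit_dir, scale. extensionality i. field. lra. Qed.

Lemma dist_scale_self n c z : dist n (scale c z) z = Rabs (c - 1) * norm n z.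
Proof.
  unfold dist. rewrite <- norm_scale. f_equal. unfold scale. extensionality i. ring.
Qed.

Definition basis0 : Rn := fun i => if Nat.eq_dec i 0 then 1 else 0.

Lemma inner_basis0_l n p : (1 <= n)%nat -> inner n basis0 p = p 0%nat.
Proof.
  intros Hn. induction n as [| k IH]; [lia |]. simpl. destruct k.
  - unfold basis0. simpl. ring.
  - rewrite IH by lia. unfold basis0. destruct Nat.eq_dec; [lia | ring].
Qed.

Lemma norm_basis0 n : (1 <= n)%nat -> norm n basis0 = 1.
Proof.
  intros Hn. apply norm_eq_of_sq; [lra |].
  rewrite inner_basis0_l by exact Hn. unfold basis0. simpl. ring.
Qed.

Lemma norm_scale_basis0 n r : (1 <= n)%nat -> norm n (scale r basis0) = Rabs r.
Proof. intros Hn. rewrite norm_scale, norm_basis0 by exact Hn. ring. Qed.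

Lemma inner_supported01 n z p : (2 <= n)%nat -> (forall i, (2 <= i)%nat -> z i = 0) ->
  inner n z p = z 0%nat * p 0%nat + z 1%nat * p 1%nat.
Proof.
  intros Hn Hz. induction n as [| k IH]; [lia |].
  destruct (Nat.eq_dec k 1) as [-> | Hk]; simpl; [ring |].
  rewrite IH, (Hz k) by lia. ring.
Qed.

Lemma exists_unit_orthogonal n p : (2 <= n)%nat -> exists u, norm n u = 1 /\ inner n p u = 0.
Proof.
  intros Hn.
  set (z := fun i => if Nat.eq_dec i 0 then - p 1%nat else if Nat.eq_dec i 1 then p 0%nat else 0).
  assert (Hz : forall i, (2 <= i)%nat -> z i = 0).
  { intros i Hi. unfold z. do 2 (destruct Nat.eq_dec; [lia |]). reflexivity. }
  assert (Hzp : inner n z p = 0)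
    by (rewrite inner_supported01 by assumption; unfold z; simpl; ring).
  assert (Hzz : inner n z z = p 0%nat ^ 2 + p 1%nat ^ 2)
    by (rewrite inner_supported01 by assumption; unfold z; simpl; ring).
  destruct (Req_dec (inner n z z) 0) as [H0 | H0].
  - exists basis0. split; [apply norm_basis0; lia |].
    rewrite inner_sym, inner_basis0_l by lia.
    pose proof (pow2_ge_0 (p 0%nat)); pose proof (pow2_ge_0 (p 1%nat)). nra.
  - assert (0 < norm n z).
    { pose proof (norm_ge0 n z); pose proof (norm_sq n z).
      destruct (Req_dec (norm n z) 0) as [E | E]; [rewrite E in *; nra | lra]. }
    exists (unit_dir n z). split; [apply norm_unit_dir; assumption |].
    unfold unit_dir. rewrite inner_scale_r, inner_sym, Hzp. ring.
Qed.

(* The great circle from [p] to [q] is split at [u] into two arcs of at most a right angle. *)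
Lemma exists_unit_between n p q : (2 <= n)%nat -> norm n p = 1 -> norm n q = 1 ->
  exists u, norm n u = 1 /\ 0 <= inner n p u /\ 0 <= inner n u q.
Proof.
  intros Hn Hp Hq.
  set (s := fun i => 1 * p i + 1 * q i).
  pose proof (norm_inner_ge n p q) as Hc. rewrite Hp, Hq in Hc.
  assert (Hsp : inner n p s = 1 + inner n p q)
    by (unfold s; rewrite inner_combr, inner_unit by assumption; ring).
  assert (Hsq : inner n s q = inner n p q + 1)
    by (unfold s; rewrite inner_combl, (inner_unit n q) by assumption; ring).
  destruct (Req_dec (norm n s) 0) as [H0 | H0].
  - destruct (exists_unit_orthogonal n p Hn) as [u [Hu Hpu]]. exists u. split; [exact Hu |].
    assert (Hsu : inner n s u = 0).
    { pose proof (Rabs_inner_le n s u) as Hcs. rewrite H0, Rmult_0_l in Hcs.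
      apply Rabs_eq_0. pose proof (Rabs_pos (inner n s u)). lra. }
    unfold s in Hsu. rewrite inner_combl, Hpu, (inner_sym n q u) in Hsu. lra.
  - assert (Hs : 0 < norm n s) by (pose proof (norm_ge0 n s); lra).
    exists (unit_dir n s). split; [apply norm_unit_dir; exact Hs |].
    assert (0 < / norm n s) by (apply Rinv_0_lt_compat; exact Hs).
    unfold unit_dir. rewrite inner_scale_l, inner_scale_r, Hsp, Hsq.
    split; apply Rmult_le_pos; lra.
Qed.

Lemma Inf_le (E : R -> Prop) v :
  (exists m, forall x, E x -> m <= x) -> E v -> Inf E <= v.
Proof.
  intros Hb Hv. unfold Inf.
  destruct excluded_middle_informative as [H | H].
  - destruct completeness as [m Hlub]; simpl; destruct Hlub as [Hm _].
    assert (- v <= m) by (apply Hm; rewrite Ropp_involutive; exact Hv). lra.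
  - exfalso. apply H. split; eauto.
Qed.

Lemma Inf_ge (E : R -> Prop) b :
  (exists x, E x) -> (forall x, E x -> b <= x) -> b <= Inf E.
Proof.
  intros Hn Hb. unfold Inf.
  destruct excluded_middle_informative as [H | H].
  - destruct completeness as [m Hlub]; simpl; destruct Hlub as [_ Hm].
    assert (m <= - b) by (apply Hm; intros y Hy; specialize (Hb _ Hy); lra). lra.
  - exfalso. apply H. split; eauto.
Qed.

Lemma Inf_le_approx (E : R -> Prop) b :
  (exists m, forall x, E x -> m <= x) ->
  (forall eps, 0 < eps -> exists v, E v /\ v <= b + eps) -> Inf E <= b.
Proof.
  intros Hb He. unfold Inf.
  destruct excluded_middle_informative as [H | H].
  - destruct completeness as [m Hlub]; simpl; destruct Hlub as [Hm _].
    destruct (Rle_dec (- m) b) as [Hle | Hgt]; [exact Hle | exfalso].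
    destruct (He ((- m - b) / 2)) as [v [Ev Hv]]; [lra |].
    assert (- v <= m) by (apply Hm; rewrite Ropp_involutive; exact Ev). lra.
  - exfalso. apply H. split; [exact Hb |].
    destruct (He 1) as [v [Ev _]]; [lra | eauto].
Qed.

Lemma div_in_unit s L : 0 < L -> 0 <= s <= L -> 0 <= s / L <= 1.
Proof.
  intros HL Hs. split.
  - apply Rmult_le_pos; [lra | left; apply Rinv_0_lt_compat; lra].
  - apply Rmult_le_reg_r with L; [lra |]. unfold Rdiv. rewrite Rmult_assoc, Rinv_l; lra.
Qed.

Lemma Rmax_le_Rmin_add a b d : Rabs (a - b) <= d -> Rmax a b <= Rmin a b + d.
Proof.
  intros H. pose proof (Rle_abs (a - b)); pose proof (Rabs_maj2 (a - b)).
  unfold Rmin, Rmax. destruct Rle_dec; lra.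
Qed.

Lemma RInt_shift (f : R -> R) a b c :
  ex_RInt f (a - c) (b - c) -> RInt (fun s => f (s - c)) a b = RInt f (a - c) (b - c).
Proof.
  intros Hex. replace (a - c) with (1 * a + - c) in * by ring.
  replace (b - c) with (1 * b + - c) in * by ring.
  rewrite <- (RInt_comp_lin f) by exact Hex.
  apply RInt_ext. intros s _. unfold scal; simpl; unfold mult; simpl.
  replace (1 * s + - c) with (s - c) by ring. ring.
Qed.

Lemma RInt_reverse (f : R -> R) L :
  ex_RInt f 0 L -> RInt (fun s => f (L - s)) 0 L = RInt f 0 L.
Proof.
  intros Hex. apply is_RInt_unique.
  assert (H : is_RInt f (-1 * 0 + L) (-1 * L + L) (- RInt f 0 L)).
  { replace (-1 * 0 + L) with L by ring. replace (-1 * L + L) with 0 by ring.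
    apply (is_RInt_swap f L 0), (RInt_correct f 0 L), Hex. }
  apply is_RInt_comp_lin, (is_RInt_scal _ _ _ (-1)) in H.
  assert (Hv : forall r : R, r = -1 * - r) by (intros; ring).
  rewrite (Hv (RInt f 0 L)).
  refine (is_RInt_ext _ _ 0 L _ _ H).
  intros y _. unfold scal; simpl; unfold mult; simpl.
  replace (-1 * y + L) with (L - y) by ring. ring.
Qed.

Lemma ex_RInt_sub (f : R -> R) L s t :
  0 <= s <= t -> t <= L -> ex_RInt f 0 L -> ex_RInt f s t.
Proof.
  intros Hst HtL Hex. apply (ex_RInt_Chasles_2 f 0); [lra |].
  apply (ex_RInt_Chasles_1 f 0 t L); [lra | exact Hex].
Qed.

Lemma RInt_inv_affine a L : 1 < a -> 0 <= L ->
  RInt (fun s => / (a + s - 1)) 0 L = ln ((a + L - 1) / (a - 1)).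
Proof.
  intros Ha HL. rewrite ln_div by lra.
  apply (@is_RInt_unique R_CompleteNormedModule).
  replace (ln (a + L - 1) - ln (a - 1))
    with (@minus R_AbelianGroup (ln (a + L - 1)) (ln (a + 0 - 1)))
    by (unfold minus, plus, opp; simpl; rewrite Rplus_0_r; ring).
  apply (@is_RInt_derive R_CompleteNormedModule (fun s => ln (a + s - 1))).
  - intros s Hs. rewrite Rmin_left, Rmax_right in Hs by lra.
    auto_derive; [lra | field; lra].
  - intros s Hs. rewrite Rmin_left, Rmax_right in Hs by lra.
    apply continuity_pt_filterlim, (continuity_pt_inv (fun s => a + s - 1)); [| lra].
    apply continuity_pt_minus; [| apply continuity_pt_const; intros p q; reflexivity].
    apply continuity_pt_plus; [apply continuity_pt_const; intros p q; reflexivity |].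
    apply derivable_continuous_pt, derivable_pt_id.
Qed.

Lemma exp_pow_nat k y : exp y ^ k = exp (INR k * y).
Proof. rewrite <- Rpower_pow by apply exp_pos. unfold Rpower. rewrite ln_exp. reflexivity. Qed.

Lemma pow_le_exp k x : (0 < k)%nat -> 0 <= x -> (1 + x / INR k) ^ k <= exp x.
Proof.
  intros Hk Hx. pose proof (lt_0_INR k Hk).
  replace (exp x) with (exp (x / INR k) ^ k) by (rewrite exp_pow_nat; f_equal; field; lra).
  apply pow_incr. split; [| apply exp_ineq1_le].
  assert (0 <= x / INR k) by (apply Rdiv_le_0_compat; lra). lra.
Qed.

Lemma exp_mul_pow_le_1 k x : (0 < k)%nat -> 0 <= x <= INR k ->
  exp x * (1 - x / INR k) ^ k <= 1.
Proof.
  intros Hk Hx. pose proof (lt_0_INR k Hk).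
  assert (Hxk : 0 <= x / INR k <= 1).
  { split; [apply Rdiv_le_0_compat; lra |].
    apply Rmult_le_reg_r with (INR k); [lra |]. unfold Rdiv. rewrite Rmult_assoc, Rinv_l; lra. }
  replace (exp x) with (exp (x / INR k) ^ k) by (rewrite exp_pow_nat; f_equal; field; lra).
  rewrite <- Rpow_mult_distr. apply Rle_trans with (1 ^ k); [| rewrite pow1; lra].
  apply pow_incr. split.
  - apply Rmult_le_pos; [left; apply exp_pos | lra].
  - pose proof (exp_ineq1_le (- (x / INR k))). pose proof (exp_pos (x / INR k)).
    apply Rle_trans with (exp (x / INR k) * exp (- (x / INR k))); [apply Rmult_le_compat_l; lra |].
    rewrite <- exp_plus, Rplus_opp_r, exp_0. lra.
Qed.

Lemma ln_le_of_pow_le k a c : (0 < k)%nat -> 0 < a -> 0 <= c ->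
  a <= (1 + c / INR k) ^ k -> ln a <= c.
Proof.
  intros Hk Ha Hc Hpow. rewrite <- (ln_exp c). apply ln_le; [exact Ha |].
  eapply Rle_trans; [exact Hpow | apply pow_le_exp; assumption].
Qed.

Lemma le_ln_of_pow_ge k a c : (0 < k)%nat -> 0 <= c <= INR k ->
  1 <= a * (1 - c / INR k) ^ k -> c <= ln a.
Proof.
  intros Hk Hc Hpow. rewrite <- (ln_exp c). apply ln_le; [apply exp_pos |].
  pose proof (exp_mul_pow_le_1 k c Hk Hc). pose proof (exp_pos c).
  assert (0 <= (1 - c / INR k) ^ k).
  { apply pow_le. pose proof (lt_0_INR k Hk).
    apply Rmult_le_reg_r with (INR k); [lra |].
    unfold Rminus, Rdiv.
    rewrite Rmult_plus_distr_r, Ropp_mult_distr_l_reverse, Rmult_assoc, Rinv_l; lra. }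
  destruct (Req_dec ((1 - c / INR k) ^ k) 0) as [Hz | Hnz]; [rewrite Hz in Hpow; lra |].
  apply Rmult_le_reg_r with ((1 - c / INR k) ^ k); lra.
Qed.

Lemma INR_64 : INR 64 = 64.
Proof. simpl. lra. Qed.

Lemma ln2_bounds : 68 / 100 <= ln 2 <= 7 / 10.
Proof.
  split.
  - apply (le_ln_of_pow_ge 64); [lia | rewrite INR_64; lra ..].
  - apply (ln_le_of_pow_le 64); [lia | lra | lra | rewrite INR_64; lra].
Qed.

Lemma ln3_bounds : 1 <= ln 3 <= 111 / 100.
Proof.
  split.
  - rewrite <- (ln_exp 1). apply ln_le; [apply exp_pos | apply exp_le_3].
  - apply (ln_le_of_pow_le 64); [lia | lra | lra | rewrite INR_64; lra].
Qed.

Lemma ln_7_3_ge : 83 / 100 <= ln (7 / 3).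
Proof. apply (le_ln_of_pow_ge 64); [lia | rewrite INR_64; lra ..]. Qed.

Lemma PI_ge_314 : 314 / 100 <= PI.
Proof.
  pose proof (PI_2_3_7_ineq 1) as [H _].
  unfold PI_2_3_7_tg, Ratan_seq, tg_alt in H. simpl in H. lra.
Qed.

Lemma sqrt2_le : sqrt 2 <= 14143 / 10000.
Proof.
  rewrite <- (sqrt_Rsqr (14143 / 10000)) by lra.
  apply sqrt_le_1_alt. unfold Rsqr. lra.
Qed.

Lemma ln_1_plus_ge_half t : 0 <= t <= 1 -> t / 2 <= ln (1 + t).
Proof.
  intros Ht. pose proof (exp_ineq1_le (- ln (1 + t))).
  rewrite exp_Ropp, exp_ln in H by lra.
  assert (t / 2 <= 1 - / (1 + t)).
  { replace (1 - / (1 + t)) with (t / (1 + t)) by (field; lra).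
    unfold Rdiv. apply Rmult_le_compat_l; [lra | apply Rinv_le_contravar; lra]. }
  lra.
Qed.

Lemma ln_radial_le R a m d K : 0 < m -> m <= a - 1 -> a < R -> R - 1 <= m + K * d ->
  1 <= K -> 0 <= d -> ln ((R - 1) / (a - 1)) <= ln K + ln (1 + d / m).
Proof.
  intros Hm Ha HR HRK HK Hd.
  assert (0 <= d / m) by (apply Rdiv_le_0_compat; lra).
  rewrite <- ln_mult by lra. apply ln_le; [apply Rdiv_lt_0_compat; lra |].
  apply Rle_trans with ((R - 1) / m).
  - unfold Rdiv. apply Rmult_le_compat_l; [lra | apply Rinv_le_contravar; lra].
  - replace (K * (1 + d / m)) with ((K * m + K * d) / m) by (field; lra).
    unfold Rdiv. apply Rmult_le_compat_r; [left; apply Rinv_0_lt_compat; lra | nra].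
Qed.

(** * Quasihyperbolic length in the exterior of the unit ball *)

Lemma boundary_ext_ball n z : boundary_pt n (ext_ball n) z <-> norm n z = 1.
Proof.
  unfold ext_ball. split.
  - intros [Hcl Hint].
    destruct (Rtotal_order (norm n z) 1) as [Hlt | [Heq | Hgt]]; [exfalso | exact Heq | exfalso].
    + destruct (Hcl (1 - norm n z)) as [w [Hw Hd]]; [lra |].
      pose proof (norm_sub_le_dist n w z). lra.
    + apply Hint. exists (norm n z - 1). split; [lra |]. intros w Hd.
      pose proof (norm_sub_le_dist n z w). rewrite dist_sym in Hd. lra.
  - intros Hz. split.
    + intros eps He. exists (scale (1 + eps / 2) z). split.
      * rewrite norm_scale_pos, Hz; lra.
      * rewrite dist_scale_self, Hz, Rabs_pos_eq; lra.
    + intros [eps [He Hball]].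
      set (t := Rmin (eps / 2) (1 / 2)).
      assert (t1 : 0 < t) by (apply Rmin_glb_lt; lra).
      pose proof (Rmin_l (eps / 2) (1 / 2)); pose proof (Rmin_r (eps / 2) (1 / 2)).
      assert (Hin : 1 < norm n (scale (1 - t) z)).
      { apply Hball. rewrite dist_scale_self, Hz, Rabs_left; unfold t in *; lra. }
      rewrite norm_scale_pos, Hz in Hin; unfold t in *; lra.
Qed.

Lemma dG_ext_ball n x : ext_ball n x -> dG n (ext_ball n) x = norm n x - 1.
Proof.
  unfold ext_ball. intros Hx.
  assert (Hz : norm n (unit_dir n x) = 1) by (apply norm_unit_dir; lra).
  assert (Hd : dist n x (unit_dir n x) = norm n x - 1).
  { assert (/ norm n x < 1) by (rewrite <- Rinv_1; apply Rinv_lt_contravar; lra).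
    rewrite dist_sym. unfold unit_dir. rewrite dist_scale_self, Rabs_left1 by lra.
    field. lra. }
  unfold dG. apply Rle_antisym.
  - apply Inf_le.
    + exists 0. intros r [z [_ ->]]. apply norm_ge0.
    + exists (unit_dir n x). split; [apply boundary_ext_ball |]; auto.
  - apply Inf_ge.
    + exists (norm n x - 1), (unit_dir n x). split; [apply boundary_ext_ball |]; auto.
    + intros r [z [Hb ->]]. apply boundary_ext_ball in Hb.
      pose proof (norm_sub_le_dist n x z). lra.
Qed.

Definition lipschitz1 n L (gam : R -> Rn) : Prop :=
  forall s t, 0 <= s <= L -> 0 <= t <= L -> dist n (gam s) (gam t) <= Rabs (s - t).

Definition outside_ball n L (gam : R -> Rn) : Prop :=
  forall s, 0 <= s <= L -> 1 < norm n (gam s).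

Definition qh_integrand n (gam : R -> Rn) (s : R) : R := / (norm n (gam s) - 1).

(* The curves allowed in [kG], with [d_G(x) = |x| - 1] already substituted. *)
Definition qh_length n (x y : Rn) (v : R) : Prop :=
  exists L gam, 0 <= L /\ gam 0 = x /\ gam L = y /\
    lipschitz1 n L gam /\ outside_ball n L gam /\ v = RInt (qh_integrand n gam) 0 L.

(* Coquelicot's continuity is two-sided, so the parameter is clamped to [0, L] to get an
   integrand continuous on all of R. *)
Definition clamp L s := Rmax 0 (Rmin L s).

Lemma clamp_in L s : 0 <= L -> 0 <= clamp L s <= L.
Proof. intros. unfold clamp, Rmax, Rmin. repeat destruct Rle_dec; lra. Qed.

Lemma clamp_id L s : 0 <= s <= L -> clamp L s = s.
Proof. intros. unfold clamp, Rmax, Rmin. repeat destruct Rle_dec; lra. Qed.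

Lemma clamp_lipschitz L s t : Rabs (clamp L s - clamp L t) <= Rabs (s - t).
Proof.
  unfold clamp, Rmax, Rmin. apply Rabs_le.
  pose proof (Rabs_maj2 (s - t)); pose proof (Rle_abs (s - t)).
  repeat destruct Rle_dec; lra.
Qed.

Lemma ex_RInt_qh_integrand n L gam : 0 <= L ->
  lipschitz1 n L gam -> outside_ball n L gam -> ex_RInt (qh_integrand n gam) 0 L.
Proof.
  intros HL Hlip Hout.
  set (h := fun s => norm n (gam (clamp L s))).
  assert (Hh : forall s t, Rabs (h s - h t) <= Rabs (s - t)).
  { intros s t. unfold h. eapply Rle_trans; [apply Rabs_norm_sub_le_dist |].
    eapply Rle_trans; [apply Hlip; apply clamp_in; exact HL | apply clamp_lipschitz]. }
  apply ex_RInt_ext with (fun s => / (h s - 1)).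
  { intros s Hs. rewrite Rmin_left, Rmax_right in Hs by lra.
    unfold h, qh_integrand. rewrite clamp_id; [reflexivity | lra]. }
  apply (@ex_RInt_continuous R_CompleteNormedModule). intros z _.
  apply continuity_pt_filterlim, (continuity_pt_inv (fun s => h s - 1)).
  - apply continuity_pt_minus; [| apply continuity_pt_const; intros a b; reflexivity].
    intros eps He. exists eps. split; [exact He |]. intros y [_ Hy].
    eapply Rle_lt_trans; [apply Hh | exact Hy].
  - unfold h. pose proof (Hout _ (clamp_in L z HL)). lra.
Qed.

Lemma kG_ext_ball n x y : kG n (ext_ball n) x y = Inf (qh_length n x y).
Proof.
  unfold kG. f_equal. extensionality v. apply propositional_extensionality.
  assert (Hint : forall L gam, 0 <= L -> outside_ball n L gam ->
            RInt (fun s => / dG n (ext_ball n) (gam s)) 0 L = RInt (qh_integrand n gam) 0 L).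
  { intros L gam HL Hout. apply RInt_ext. intros s Hs.
    rewrite Rmin_left, Rmax_right in Hs by lra.
    unfold qh_integrand. rewrite dG_ext_ball; [reflexivity | apply Hout; lra]. }
  split.
  - intros [L [gam [HL [H0 [H1 [Hlip [Hout [pr Hv]]]]]]]].
    exists L, gam. repeat split; auto.
    rewrite Hv, <- RInt_Reals. apply Hint; auto.
  - intros [L [gam [HL [H0 [H1 [Hlip [Hout Hv]]]]]]].
    assert (Hex : ex_RInt (fun s => / dG n (ext_ball n) (gam s)) 0 L).
    { apply ex_RInt_ext with (qh_integrand n gam).
      - intros s Hs. rewrite Rmin_left, Rmax_right in Hs by lra.
        unfold qh_integrand. rewrite dG_ext_ball; [reflexivity | apply Hout; lra].
      - apply ex_RInt_qh_integrand; auto. }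
    exists L, gam. repeat split; auto.
    exists (ex_RInt_Reals_0 _ _ _ Hex). rewrite <- RInt_Reals, Hint; auto.
Qed.

Lemma qh_length_ge0 n x y v : qh_length n x y v -> 0 <= v.
Proof.
  intros [L [gam [HL [_ [_ [Hlip [Hout ->]]]]]]].
  apply RInt_ge_0; [exact HL | apply ex_RInt_qh_integrand; auto |].
  intros s Hs. pose proof (Hout s ltac:(lra)).
  left. apply Rinv_0_lt_compat. lra.
Qed.

Definition concat_path L1 (g1 g2 : R -> Rn) (s : R) : Rn :=
  if Rle_dec s L1 then g1 s else g2 (s - L1).

Lemma lipschitz1_concat n L1 L2 g1 g2 : 0 <= L1 -> g1 L1 = g2 0 ->
  lipschitz1 n L1 g1 -> lipschitz1 n L2 g2 -> lipschitz1 n (L1 + L2) (concat_path L1 g1 g2).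
Proof.
  intros HL1 Hjoin H1 H2.
  assert (Hcross : forall s t, 0 <= s <= L1 -> L1 < t <= L1 + L2 ->
            dist n (g1 s) (g2 (t - L1)) <= t - s).
  { intros s t Hs Ht.
    pose proof (H1 s L1 Hs ltac:(lra)) as D1.
    pose proof (H2 0 (t - L1) ltac:(lra) ltac:(lra)) as D2.
    rewrite Rabs_left1 in D1 by lra. rewrite Rabs_left1 in D2 by lra.
    pose proof (dist_triangle n (g1 s) (g1 L1) (g2 (t - L1))). rewrite Hjoin in *. lra. }
  intros s t Hs Ht. unfold concat_path.
  destruct (Rle_dec s L1), (Rle_dec t L1).
  - apply H1; lra.
  - rewrite Rabs_left1 by lra. specialize (Hcross s t). lra.
  - rewrite dist_sym, Rabs_right by lra. apply Hcross; lra.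
  - replace (s - t) with ((s - L1) - (t - L1)) by ring. apply H2; lra.
Qed.

Lemma qh_length_concat n x y z v1 v2 :
  qh_length n x y v1 -> qh_length n y z v2 -> qh_length n x z (v1 + v2).
Proof.
  intros [L1 [g1 [HL1 [H10 [H11 [Hlip1 [Hout1 ->]]]]]]]
         [L2 [g2 [HL2 [H20 [H21 [Hlip2 [Hout2 ->]]]]]]].
  set (g := concat_path L1 g1 g2).
  assert (E1 : forall s, s <= L1 -> g s = g1 s).
  { intros s Hs. unfold g, concat_path. destruct Rle_dec; [reflexivity | lra]. }
  assert (E2 : forall s, L1 < s -> g s = g2 (s - L1)).
  { intros s Hs. unfold g, concat_path. destruct Rle_dec; [lra | reflexivity]. }
  assert (Hlip : lipschitz1 n (L1 + L2) g)
    by (apply lipschitz1_concat; try assumption; congruence).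
  assert (Hout : outside_ball n (L1 + L2) g).
  { intros s Hs. destruct (Rle_dec s L1).
    - rewrite E1 by assumption. apply Hout1; lra.
    - rewrite E2 by lra. apply Hout2; lra. }
  pose proof (ex_RInt_qh_integrand n (L1 + L2) g ltac:(lra) Hlip Hout) as Hex.
  exists (L1 + L2), g. split; [lra |]. split; [rewrite E1 by lra; exact H10 |].
  split.
  { destruct (Rle_dec (L1 + L2) L1).
    - assert (L2 = 0) by lra. subst L2. rewrite E1 by lra. rewrite Rplus_0_r. congruence.
    - rewrite E2 by lra. replace (L1 + L2 - L1) with L2 by ring. exact H21. }
  split; [exact Hlip |]. split; [exact Hout |].
  rewrite <- (RInt_Chasles _ 0 L1 (L1 + L2)).
  2: apply ex_RInt_Chasles_1 with (L1 + L2); [lra | exact Hex].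
  2: apply ex_RInt_Chasles_2 with 0; [lra | exact Hex].
  change plus with Rplus. f_equal.
  - apply RInt_ext. intros s Hs. rewrite Rmin_left, Rmax_right in Hs by lra.
    unfold qh_integrand. rewrite E1 by lra. reflexivity.
  - rewrite (RInt_ext (qh_integrand n g) (fun s => qh_integrand n g2 (s - L1)) L1 (L1 + L2)).
    + rewrite RInt_shift; replace (L1 - L1) with 0 by ring;
        replace (L1 + L2 - L1) with L2 by ring; [reflexivity |].
      apply ex_RInt_qh_integrand; auto.
    + intros s Hs. rewrite Rmin_left, Rmax_right in Hs by lra.
      unfold qh_integrand. rewrite E2 by lra. reflexivity.
Qed.

Lemma qh_length_sym n x y v : qh_length n x y v -> qh_length n y x v.
Proof.
  intros [L [gam [HL [H0 [H1 [Hlip [Hout ->]]]]]]].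
  exists L, (fun s => gam (L - s)). repeat split; auto.
  - replace (L - 0) with L by ring. exact H1.
  - replace (L - L) with 0 by ring. exact H0.
  - intros s t Hs Ht. replace (s - t) with ((L - t) - (L - s)) by ring.
    rewrite dist_sym. apply Hlip; lra.
  - intros s Hs. apply Hout; lra.
  - symmetry. apply (RInt_reverse (qh_integrand n gam)), ex_RInt_qh_integrand; auto.
Qed.

Lemma lipschitz1_lerp n u v L : 0 < L -> dist n u v <= L ->
  lipschitz1 n L (fun s => lerp u v (s / L)).
Proof.
  intros HL Hd s t _ _. rewrite dist_lerp.
  replace (s / L - t / L) with ((s - t) / L) by (field; lra).
  rewrite Rabs_div, (Rabs_pos_eq L) by lra.
  apply Rle_trans with (Rabs (s - t) / L * L).
  - apply Rmult_le_compat_l; [| exact Hd].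
    apply Rmult_le_pos; [apply Rabs_pos | left; apply Rinv_0_lt_compat; lra].
  - right. field. lra.
Qed.

Lemma qh_length_lerp n u v L : 0 < L -> dist n u v <= L ->
  (forall t, 0 <= t <= 1 -> 1 < norm n (lerp u v t)) ->
  qh_length n u v (RInt (qh_integrand n (fun s => lerp u v (s / L))) 0 L).
Proof.
  intros HL Hd Hout. exists L, (fun s => lerp u v (s / L)). repeat split.
  - lra.
  - rewrite Rdiv_0_l. apply lerp_0.
  - rewrite Rdiv_diag by lra. apply lerp_1.
  - apply lipschitz1_lerp; assumption.
  - intros s Hs. apply Hout, div_in_unit; assumption.
Qed.

Lemma qh_length_segment_le n u v L rho : 0 < L -> dist n u v <= L -> 1 < rho ->
  (forall t, 0 <= t <= 1 -> rho <= norm n (lerp u v t)) ->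
  exists w, qh_length n u v w /\ w <= L / (rho - 1).
Proof.
  intros HL Hd Hrho Hfar.
  assert (Hout : forall t, 0 <= t <= 1 -> 1 < norm n (lerp u v t))
    by (intros t Ht; specialize (Hfar t Ht); lra).
  eexists. split; [apply (qh_length_lerp n u v L); assumption |].
  replace (L / (rho - 1)) with (RInt (fun _ => / (rho - 1)) 0 L)
    by (rewrite RInt_const; unfold scal; simpl; unfold mult; simpl; field; lra).
  apply RInt_le; [lra | | apply ex_RInt_const |].
  - apply ex_RInt_qh_integrand; [lra | apply lipschitz1_lerp; assumption |].
    intros s Hs. apply Hout, div_in_unit; assumption.
  - intros s Hs. unfold qh_integrand. apply Rinv_le_contravar; [lra |].
    specialize (Hfar (s / L) (div_in_unit s L HL ltac:(lra))). lra.
Qed.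

Lemma qh_length_radial n u R : 1 < norm n u -> norm n u < R ->
  qh_length n u (scale (R / norm n u) u) (ln ((R - 1) / (norm n u - 1))).
Proof.
  intros Ha HR. set (a := norm n u) in *.
  assert (Hnorm : forall t, 0 <= t -> norm n (lerp u (scale (R / a) u) t) = a + t * (R - a)).
  { intros t Ht.
    replace (lerp u (scale (R / a) u) t) with (scale (1 + t * (R - a) / a) u)
      by (unfold lerp, scale; extensionality i; field; lra).
    rewrite norm_scale_pos; [fold a; field; lra |].
    assert (0 <= t * (R - a) / a)
      by (apply Rmult_le_pos; [nra | left; apply Rinv_0_lt_compat; lra]).
    lra. }
  assert (Hd : dist n u (scale (R / a) u) = R - a).
  { rewrite dist_sym, dist_scale_self, Rabs_pos_eq; fold a.
    - field. lra.
    - apply Rle_trans with ((R - a) / a); [| right; field; lra].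
      apply Rmult_le_pos; [lra | left; apply Rinv_0_lt_compat; lra]. }
  replace (ln ((R - 1) / (a - 1)))
    with (RInt (qh_integrand n (fun s => lerp u (scale (R / a) u) (s / (R - a)))) 0 (R - a)).
  - apply qh_length_lerp; [lra | lra |].
    intros t Ht. rewrite Hnorm by lra. nra.
  - rewrite (RInt_ext _ (fun s => / (a + s - 1))).
    + rewrite RInt_inv_affine by lra. do 2 f_equal. ring.
    + intros s Hs. rewrite Rmin_left, Rmax_right in Hs by lra.
      unfold qh_integrand. rewrite Hnorm.
      * do 2 f_equal. field. lra.
      * apply Rmult_le_pos; [lra | left; apply Rinv_0_lt_compat; lra].
Qed.

Lemma qh_length_via_sphere n x y R w : 1 < norm n x < R -> 1 < norm n y < R ->
  qh_length n (scale R (unit_dir n x)) (scale R (unit_dir n y)) w ->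
  qh_length n x y (ln ((R - 1) / (norm n x - 1)) + w + ln ((R - 1) / (norm n y - 1))).
Proof.
  intros Hx Hy Hw.
  apply qh_length_concat with (scale R (unit_dir n y)).
  - apply qh_length_concat with (scale R (unit_dir n x)); [| exact Hw].
    rewrite scale_unit_dir by lra. apply qh_length_radial; lra.
  - apply qh_length_sym. rewrite scale_unit_dir by lra. apply qh_length_radial; lra.
Qed.

Lemma norm_sq_sphere_chord n p q R t : norm n p = 1 -> norm n q = 1 ->
  norm n (lerp (scale R p) (scale R q) t) ^ 2 =
  R ^ 2 * (1 - 2 * t * (1 - t) * (1 - inner n p q)).
Proof.
  intros Hp Hq. rewrite norm_sq.
  replace (lerp (scale R p) (scale R q) t) with (fun i => R * (1 - t) * p i + R * t * q i)
    by (unfold lerp, scale; extensionality i; ring).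
  rewrite inner_combl, !inner_combr, (inner_sym n q p), !inner_unit by assumption. ring.
Qed.

Lemma dist_sq_sphere_chord n p q R : norm n p = 1 -> norm n q = 1 ->
  dist n (scale R p) (scale R q) ^ 2 = 2 * R ^ 2 * (1 - inner n p q).
Proof.
  intros Hp Hq. rewrite dist_sq, !norm_scale, Hp, Hq, inner_scale_l, inner_scale_r.
  rewrite !Rmult_1_r, pow2_abs. ring.
Qed.

Lemma qh_length_sphere_chord n p q R L rho : norm n p = 1 -> norm n q = 1 ->
  0 < L -> 1 < rho -> 2 * R ^ 2 * (1 - inner n p q) <= L ^ 2 ->
  rho ^ 2 <= R ^ 2 * (1 - (1 - inner n p q) / 2) ->
  exists w, qh_length n (scale R p) (scale R q) w /\ w <= L / (rho - 1).
Proof.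
  intros Hp Hq HL Hrho HdL Hnear.
  pose proof (inner_le_norm n p q) as Hc. rewrite Hp, Hq in Hc.
  apply qh_length_segment_le; [exact HL | | exact Hrho |].
  - pose proof (dist_sq_sphere_chord n p q R Hp Hq).
    pose proof (norm_ge0 n (fun i => scale R p i - scale R q i)).
    unfold dist in *. nra.
  - intros t Ht. apply norm_ge_of_sq; [lra |].
    rewrite <- norm_sq, norm_sq_sphere_chord by assumption.
    assert (2 * t * (1 - t) * (1 - inner n p q) <= (1 - inner n p q) / 2)
      by (assert (0 <= (2 * t - 1) ^ 2) by apply pow2_ge_0; nra).
    assert (0 <= R ^ 2) by apply pow2_ge_0. nra.
Qed.

Lemma qh_length_sphere_chord_wide n p q R : norm n p = 1 -> norm n q = 1 ->
  0 <= inner n p q -> sqrt 2 < R ->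
  exists w, qh_length n (scale R p) (scale R q) w /\ w <= 2 * R / (R - sqrt 2).
Proof.
  intros Hp Hq Hc HR. pose proof (inner_le_norm n p q) as Hc1. rewrite Hp, Hq in Hc1.
  assert (Hs : 0 < sqrt 2) by (apply sqrt_lt_R0; lra).
  assert (Hs2 : sqrt 2 ^ 2 = 2) by (rewrite <- Rsqr_pow2; apply Rsqr_sqrt; lra).
  replace (2 * R / (R - sqrt 2)) with (sqrt 2 * R / (R / sqrt 2 - 1))
    by (replace (2 * R) with (sqrt 2 ^ 2 * R) by (rewrite Hs2; ring); field; split; lra).
  apply qh_length_sphere_chord; try assumption.
  - apply Rmult_lt_0_compat; lra.
  - apply Rmult_lt_reg_r with (sqrt 2); [exact Hs |].
    unfold Rdiv. rewrite Rmult_assoc, Rinv_l; lra.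
  - rewrite Rpow_mult_distr, Hs2. assert (0 <= R ^ 2) by apply pow2_ge_0. nra.
  - replace ((R / sqrt 2) ^ 2) with (R ^ 2 / sqrt 2 ^ 2) by (field; lra). rewrite Hs2.
    assert (0 <= R ^ 2) by apply pow2_ge_0. nra.
Qed.

(** * Angles seen from the origin *)

Definition cos_angle n (u v : Rn) : R := inner n u v / (norm n u * norm n v).

Definition angle n (u v : Rn) : R := acos (cos_angle n u v).

Lemma cos_angle_unit_dir n u v : 0 < norm n u -> 0 < norm n v ->
  cos_angle n u v = inner n (unit_dir n u) (unit_dir n v).
Proof.
  intros Hu Hv. unfold cos_angle, unit_dir. rewrite inner_scale_l, inner_scale_r.
  field. split; lra.
Qed.

Lemma cos_angle_bound n u v : 0 < norm n u -> 0 < norm n v -> -1 <= cos_angle n u v <= 1.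
Proof.
  intros Hu Hv. pose proof (inner_le_norm n u v); pose proof (norm_inner_ge n u v).
  unfold cos_angle. assert (0 < norm n u * norm n v) by nra.
  split.
  - apply Rmult_le_reg_r with (norm n u * norm n v); [assumption |].
    unfold Rdiv. rewrite Rmult_assoc, Rinv_l; lra.
  - apply Rmult_le_reg_r with (norm n u * norm n v); [assumption |].
    unfold Rdiv. rewrite Rmult_assoc, Rinv_l; lra.
Qed.

Lemma acos_le_of_cos_le x y : -1 <= x <= 1 -> 0 <= y <= PI -> cos y <= x -> acos x <= y.
Proof.
  intros Hx Hy Hc. destruct (Rle_dec (acos x) y) as [Hle | Hgt]; [exact Hle | exfalso].
  pose proof (acos_bound x).
  assert (cos (acos x) < cos y) by (apply cos_decreasing_1; lra).
  rewrite cos_acos in * by lra. lra.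
Qed.

Lemma angle_triangle n u v w : 0 < norm n u -> 0 < norm n v -> 0 < norm n w ->
  angle n u w <= angle n u v + angle n v w.
Proof.
  intros Hu Hv Hw. unfold angle.
  pose proof (cos_angle_bound n u v Hu Hv); pose proof (cos_angle_bound n v w Hv Hw).
  pose proof (acos_bound (cos_angle n u v)); pose proof (acos_bound (cos_angle n v w)).
  pose proof (acos_bound (cos_angle n u w)).
  destruct (Rle_dec PI (acos (cos_angle n u v) + acos (cos_angle n v w))); [lra |].
  apply acos_le_of_cos_le; [apply cos_angle_bound; assumption | lra |].
  rewrite cos_plus, !cos_acos, !sin_acos by lra. rewrite !cos_angle_unit_dir by assumption.
  set (a := unit_dir n u); set (b := unit_dir n v); set (c := unit_dir n w).
  assert (Ha : inner n a a = 1) by (rewrite <- norm_sq; unfold a; rewrite norm_unit_dir; lra).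
  assert (Hb : inner n b b = 1) by (rewrite <- norm_sq; unfold b; rewrite norm_unit_dir; lra).
  assert (Hc : inner n c c = 1) by (rewrite <- norm_sq; unfold c; rewrite norm_unit_dir; lra).
  set (c1 := inner n a b); set (c2 := inner n b c).
  (* The components of [a] and [c] orthogonal to [b] have lengths sin(angle). *)
  set (p := fun i => 1 * a i + (- c1) * b i); set (q := fun i => 1 * c i + (- c2) * b i).
  assert (Hpq : inner n p q = inner n a c - c1 * c2).
  { unfold p, q. rewrite !inner_combl, !inner_combr, ?(inner_sym n b a), ?(inner_sym n c b).
    fold c1 c2. rewrite Hb. ring. }
  assert (Hp : norm n p = sqrt (1 - c1²)).
  { unfold norm. rewrite sumsq_inner. f_equal. unfold p.
    rewrite !inner_combl, !inner_combr, ?(inner_sym n b a). fold c1. rewrite Ha, Hb.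
    unfold Rsqr. ring. }
  assert (Hq : norm n q = sqrt (1 - c2²)).
  { unfold norm. rewrite sumsq_inner. f_equal. unfold q.
    rewrite !inner_combl, !inner_combr, ?(inner_sym n c b). fold c2. rewrite Hc, Hb.
    unfold Rsqr. ring. }
  pose proof (norm_inner_ge n p q) as Hcs. rewrite Hpq, Hp, Hq in Hcs. lra.
Qed.

Lemma cos_le_quartic y : 0 <= y <= 1 -> cos y <= 1 - y ^ 2 / 2 + y ^ 4 / 24.
Proof.
  intros Hy. pose proof PI2_1.
  destruct (cos_bound y 0) as [_ Hc]; [lra | lra |].
  unfold cos_approx, cos_term in Hc. simpl in Hc. lra.
Qed.

Lemma cos_angle_ge_close n u v m h : 0 < m -> m <= norm n u -> m <= norm n v ->
  dist n u v <= h -> 1 - (h / m) ^ 2 / 2 <= cos_angle n u v.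
Proof.
  intros Hm Hu Hv Hd. unfold cos_angle.
  pose proof (dist_sq n u v); pose proof (norm_ge0 n (fun i => u i - v i)).
  set (a := norm n u) in *; set (b := norm n v) in *.
  assert (Hab : m * m <= a * b) by (apply Rmult_le_compat; lra).
  assert (dist n u v ^ 2 <= h ^ 2) by (unfold dist in *; nra).
  assert (h ^ 2 <= (h / m) ^ 2 * (a * b)).
  { replace ((h / m) ^ 2 * (a * b)) with (h ^ 2 * (a * b) / (m * m)) by (field; lra).
    apply Rmult_le_reg_r with (m * m); [nra |].
    replace (h ^ 2 * (a * b) / (m * m) * (m * m)) with (h ^ 2 * (a * b)) by (field; lra). nra. }
  apply Rmult_le_reg_r with (a * b); [nra |].
  replace (inner n u v / (a * b) * (a * b)) with (inner n u v) by (field; split; lra).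
  assert (0 <= (a - b) ^ 2) by apply pow2_ge_0. nra.
Qed.

Lemma cos_step_le q : 0 <= q <= 1 / 2 -> cos (q * (1 + q)) <= 1 - q ^ 2 / 2.
Proof.
  intros Hq. eapply Rle_trans; [apply cos_le_quartic; nra |].
  assert ((1 + q) ^ 4 <= 81 / 16) by (assert ((1 + q) ^ 2 <= 9 / 4) by nra; nra).
  assert (q ^ 2 * (1 + q) ^ 4 <= q * (81 / 32)) by nra.
  assert (q ^ 4 * (1 + q) ^ 4 <= q ^ 2 * (12 * q + 6 * q ^ 2)) by nra.
  nra.
Qed.

Lemma angle_le_close n u v m h : 1 < m -> m <= norm n u -> m <= norm n v ->
  dist n u v <= h -> 0 < h <= 1 / 2 -> angle n u v <= h / (m + h - 1).
Proof.
  intros Hm Hu Hv Hd Hh. set (q := h / m).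
  assert (Hq : 0 < q <= 1 / 2).
  { unfold q. split; [apply Rdiv_lt_0_compat; lra |].
    apply Rmult_le_reg_r with m; [lra |]. unfold Rdiv. rewrite Rmult_assoc, Rinv_l; nra. }
  apply Rle_trans with (q * (1 + q)).
  - apply acos_le_of_cos_le; [apply cos_angle_bound; lra | |].
    + pose proof PI2_3_2. nra.
    + eapply Rle_trans; [apply cos_step_le; lra |]. apply (cos_angle_ge_close n u v m h); lra.
  - unfold q. apply Rmult_le_reg_r with (m * m * (m + h - 1));
      [apply Rmult_lt_0_compat; nra |].
    replace (h / m * (1 + h / m) * (m * m * (m + h - 1))) with (h * ((m + h) * (m + h - 1)))
      by (field; lra).
    replace (h / (m + h - 1) * (m * m * (m + h - 1))) with (h * (m * m)) by (field; lra).
    assert (0 <= (m - 1) * (1 - 2 * h)) by (apply Rmult_le_pos; lra).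
    apply Rmult_le_compat_l; nra.
Qed.

Lemma angle_self n x : 0 < norm n x -> angle n x x = 0.
Proof.
  intros Hx. unfold angle, cos_angle. rewrite <- norm_sq.
  replace (norm n x ^ 2 / (norm n x * norm n x)) with 1 by (field; lra). apply acos_1.
Qed.

Lemma angle_le_RInt_step n L gam s h : lipschitz1 n L gam -> outside_ball n L gam ->
  0 <= s -> s + h <= L -> 0 < h <= 1 / 2 ->
  angle n (gam s) (gam (s + h)) <= RInt (qh_integrand n gam) s (s + h).
Proof.
  intros Hlip Hout Hs HsL Hh.
  pose proof (Hout s ltac:(lra)); pose proof (Hout (s + h) ltac:(lra)).
  pose proof (Rmin_l (norm n (gam s)) (norm n (gam (s + h))));
    pose proof (Rmin_r (norm n (gam s)) (norm n (gam (s + h)))).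
  set (m := Rmin (norm n (gam s)) (norm n (gam (s + h)))) in *.
  assert (Hm : 1 < m) by (apply Rmin_glb_lt; lra).
  assert (Hnear : forall r, s <= r <= s + h -> norm n (gam r) <= m + h).
  { intros r Hr. unfold m, Rmin. destruct Rle_dec.
    - pose proof (norm_sub_le_dist n (gam r) (gam s)).
      pose proof (Hlip r s ltac:(lra) ltac:(lra)). rewrite Rabs_right in * by lra. lra.
    - pose proof (norm_sub_le_dist n (gam r) (gam (s + h))).
      pose proof (Hlip r (s + h) ltac:(lra) ltac:(lra)). rewrite Rabs_left1 in * by lra. lra. }
  eapply Rle_trans; [apply (angle_le_close n _ _ m h); try lra |].
  { eapply Rle_trans; [apply Hlip; lra |]. rewrite Rabs_left1; lra. }
  replace (h / (m + h - 1)) with (RInt (fun _ => / (m + h - 1)) s (s + h))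
    by (rewrite RInt_const; unfold scal; simpl; unfold mult; simpl; field; lra).
  apply RInt_le; [lra | apply ex_RInt_const | |].
  - apply (ex_RInt_sub _ L); [lra | lra |]. apply ex_RInt_qh_integrand; auto; lra.
  - intros r Hr. unfold qh_integrand. apply Rinv_le_contravar.
    + pose proof (Hout r ltac:(lra)). lra.
    + pose proof (Hnear r ltac:(lra)). lra.
Qed.

Lemma qh_length_ge_angle n x y v : qh_length n x y v -> angle n x y <= v.
Proof.
  intros [L [gam [HL [H0 [H1 [Hlip [Hout ->]]]]]]].
  assert (Hx : 0 < norm n x) by (rewrite <- H0; pose proof (Hout 0 ltac:(lra)); lra).
  destruct (Req_dec L 0) as [HL0 | HL0].
  { subst L. rewrite <- H1, H0, angle_self, RInt_point by exact Hx. right; reflexivity. }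
  destruct (INR_unbounded (2 * L)) as [N HN].
  assert (HN0 : 0 < INR N) by lra.
  set (h := L / INR N).
  assert (Hh : 0 < h <= 1 / 2).
  { unfold h. split; [apply Rdiv_lt_0_compat; lra |].
    apply Rmult_le_reg_r with (INR N); [lra |]. unfold Rdiv. rewrite Rmult_assoc, Rinv_l; lra. }
  assert (HNh : INR N * h = L) by (unfold h; field; lra).
  assert (Hsteps : forall k, (k <= N)%nat ->
            angle n x (gam (INR k * h)) <= RInt (qh_integrand n gam) 0 (INR k * h)).
  { induction k as [| k IH]; intros Hk.
    - rewrite Rmult_0_l, H0, RInt_point, angle_self by exact Hx. right; reflexivity.
    - assert (Hk1 : INR (S k) <= INR N) by (apply le_INR; exact Hk).
      rewrite S_INR in *. set (s := INR k * h) in *.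
      assert (Hs : 0 <= s) by (apply Rmult_le_pos; [apply pos_INR | lra]).
      assert (HsL : s + h <= L) by (rewrite <- HNh; unfold s; nra).
      replace ((INR k + 1) * h) with (s + h) by (unfold s; ring).
      pose proof (ex_RInt_qh_integrand n L gam HL Hlip Hout) as Hex.
      rewrite <- (RInt_Chasles _ 0 s (s + h)); [change plus with Rplus |
        apply (ex_RInt_sub _ L); auto; lra | apply (ex_RInt_sub _ L); auto; lra].
      eapply Rle_trans; [apply (angle_triangle n x (gam s) (gam (s + h))) |].
      + exact Hx.
      + pose proof (Hout s ltac:(lra)). lra.
      + pose proof (Hout (s + h) ltac:(lra)). lra.
      + apply Rplus_le_compat; [apply IH; lia |].
        apply (angle_le_RInt_step n L); auto. }
  rewrite <- H1, <- HNh. apply Hsteps, Nat.le_refl.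
Qed.

(** * Upper bound *)

Definition j_ext n (x y : Rn) : R := ln (1 + dist n x y / (Rmin (norm n x) (norm n y) - 1)).

Lemma jG_ext_ball n x y : ext_ball n x -> ext_ball n y -> jG n (ext_ball n) x y = j_ext n x y.
Proof.
  intros Hx Hy. unfold jG, j_ext. rewrite !dG_ext_ball by assumption.
  do 3 f_equal. unfold Rmin. repeat destruct Rle_dec; lra.
Qed.

Lemma j_ext_ge0 n x y : 1 < norm n x -> 1 < norm n y -> 0 <= j_ext n x y.
Proof.
  intros Hx Hy. unfold j_ext. rewrite <- ln_1. apply ln_le; [lra |].
  assert (0 < Rmin (norm n x) (norm n y) - 1) by (apply Rlt_0_minus, Rmin_glb_lt; assumption).
  assert (0 <= dist n x y / (Rmin (norm n x) (norm n y) - 1))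
    by (apply Rdiv_le_0_compat; [apply norm_ge0 | assumption]).
  lra.
Qed.

Lemma qh_length_le_close n x y eps : 1 < norm n x -> 1 < norm n y -> 0 < eps ->
  dist n x y <= Rmin (norm n x) (norm n y) - 1 ->
  exists v, qh_length n x y v /\ v <= 4 * j_ext n x y + eps.
Proof.
  intros Hx Hy He Hd. unfold j_ext.
  set (m := Rmin (norm n x) (norm n y) - 1) in *. set (d := dist n x y) in *.
  assert (Hm : 0 < m) by (unfold m; apply Rlt_0_minus, Rmin_glb_lt; assumption).
  assert (Hd0 : 0 <= d) by apply norm_ge0.
  assert (Hem : 0 < eps * m / 2) by (apply Rdiv_lt_0_compat; [nra | lra]).
  destruct (qh_length_segment_le n x y (d + eps * m / 2) (1 + m - d / 2)) as [w [Hw Hwle]].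
  - lra.
  - fold d. lra.
  - lra.
  - intros t Ht. pose proof (norm_lerp_ge n x y t Ht) as Hn. fold d in Hn. unfold m. lra.
  - exists w. split; [exact Hw |].
    assert (Hdm : 0 <= d / m <= 1).
    { split; [apply Rdiv_le_0_compat; lra |].
      apply Rmult_le_reg_r with m; [lra |]. unfold Rdiv. rewrite Rmult_assoc, Rinv_l; lra. }
    pose proof (ln_1_plus_ge_half (d / m) Hdm).
    assert ((d + eps * m / 2) / (1 + m - d / 2 - 1) <= 2 * (d / m) + eps).
    { apply Rle_trans with ((d + eps * m / 2) / (m / 2)).
      - unfold Rdiv. apply Rmult_le_compat_l; [lra | apply Rinv_le_contravar; lra].
      - right. field. lra. }
    lra.
Qed.

Lemma dist_sq_ge_unit_dir n x y : 0 < norm n x -> 0 < norm n y ->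
  2 * (norm n x * norm n y) * (1 - inner n (unit_dir n x) (unit_dir n y)) <= dist n x y ^ 2.
Proof.
  intros Hx Hy. rewrite <- cos_angle_unit_dir by assumption. unfold cos_angle.
  rewrite dist_sq. assert (0 <= (norm n x - norm n y) ^ 2) by apply pow2_ge_0.
  replace (2 * (norm n x * norm n y) * (1 - inner n x y / (norm n x * norm n y)))
    with (2 * (norm n x * norm n y) - 2 * inner n x y) by (field; split; lra).
  lra.
Qed.

Lemma one_sub_inner_unit_dir_le n x y m : 0 < m -> m <= norm n x -> m <= norm n y ->
  1 - inner n (unit_dir n x) (unit_dir n y) <= dist n x y ^ 2 / (2 * m ^ 2).
Proof.
  intros Hm Hx Hy. pose proof (dist_sq_ge_unit_dir n x y ltac:(lra) ltac:(lra)).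
  pose proof (inner_le_norm n (unit_dir n x) (unit_dir n y)) as Hc.
  rewrite !norm_unit_dir in Hc by lra.
  assert (m * m <= norm n x * norm n y) by (apply Rmult_le_compat; lra).
  apply Rmult_le_reg_r with (2 * m ^ 2); [nra |].
  replace (dist n x y ^ 2 / (2 * m ^ 2) * (2 * m ^ 2)) with (dist n x y ^ 2) by (field; lra).
  nra.
Qed.

Lemma qh_length_sphere_chord_near n x y R :
  1 < Rmin (norm n x) (norm n y) -> 0 < dist n x y <= Rmin (norm n x) (norm n y) ->
  3 * dist n x y <= R - 1 -> R <= 5 * Rmin (norm n x) (norm n y) ->
  exists w, qh_length n (scale R (unit_dir n x)) (scale R (unit_dir n y)) w /\ w <= 20 / 7.
Proof.
  intros Hm' Hd HR1 HR5.
  pose proof (Rmin_l (norm n x) (norm n y)); pose proof (Rmin_r (norm n x) (norm n y)).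
  pose proof (one_sub_inner_unit_dir_le n x y (Rmin (norm n x) (norm n y))
    ltac:(lra) ltac:(lra) ltac:(lra)) as Hz.
  assert (Hp : norm n (unit_dir n x) = 1) by (apply norm_unit_dir; lra).
  assert (Hq : norm n (unit_dir n y) = 1) by (apply norm_unit_dir; lra).
  set (d := dist n x y) in *; set (m' := Rmin (norm n x) (norm n y)) in *.
  set (p := unit_dir n x) in *; set (q := unit_dir n y) in *.
  set (z := d ^ 2 / (2 * m' ^ 2)) in *.
  assert (Hz1 : 0 <= z <= 1 / 2).
  { unfold z. split; [apply Rdiv_le_0_compat; nra |].
    apply Rmult_le_reg_r with (2 * m' ^ 2); [nra |].
    replace (d ^ 2 / (2 * m' ^ 2) * (2 * m' ^ 2)) with (d ^ 2) by (field; lra). nra. }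
  set (L := R * d / m').
  assert (HL : 0 < L) by (unfold L; apply Rdiv_lt_0_compat; nra).
  assert (HL5 : L <= 5 * d).
  { unfold L. apply Rmult_le_reg_r with m'; [lra |].
    replace (R * d / m' * m') with (R * d) by (field; lra). nra. }
  assert (HRz : R * z / 2 <= 5 * d / 4).
  { unfold z. replace (R * (d ^ 2 / (2 * m' ^ 2)) / 2) with (L * d / (4 * m'))
      by (unfold L; field; lra).
    apply Rmult_le_reg_r with (4 * m'); [lra |].
    replace (L * d / (4 * m') * (4 * m')) with (L * d) by (field; lra). nra. }
  assert (Hrho : 7 * d / 4 <= R * (1 - z / 2) - 1) by lra.
  destruct (qh_length_sphere_chord n p q R L (R * (1 - z / 2)) Hp Hq HL) as [w [Hw Hwle]].
  - lra.
  - apply Rle_trans with (2 * R ^ 2 * z).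
    + apply Rmult_le_compat_l; [nra | exact Hz].
    + unfold L, z. apply Req_le. field. lra.
  - assert (0 <= R ^ 2) by apply pow2_ge_0.
    replace ((R * (1 - z / 2)) ^ 2) with (R ^ 2 * (1 - z / 2) ^ 2) by ring.
    apply Rmult_le_compat_l; [assumption | nra].
  - exists w. split; [exact Hw |].
    apply Rle_trans with (L / (7 * d / 4)).
    + apply Rle_trans with (L / (R * (1 - z / 2) - 1)); [exact Hwle |].
      unfold Rdiv. apply Rmult_le_compat_l; [lra | apply Rinv_le_contravar; lra].
    + apply Rmult_le_reg_r with (7 * d / 4); [lra |].
      replace (L / (7 * d / 4) * (7 * d / 4)) with L by (field; lra). lra.
Qed.

Lemma qh_length_le_mid n x y : 1 < norm n x -> 1 < norm n y ->
  Rmin (norm n x) (norm n y) - 1 < dist n x y <= Rmin (norm n x) (norm n y) ->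
  exists v, qh_length n x y v /\ v <= 11 * j_ext n x y.
Proof.
  intros Hx Hy Hd. unfold j_ext.
  pose proof (Rmax_le_Rmin_add _ _ _ (Rabs_norm_sub_le_dist n x y)).
  pose proof (Rmin_l (norm n x) (norm n y)); pose proof (Rmin_r (norm n x) (norm n y)).
  pose proof (Rmax_l (norm n x) (norm n y)); pose proof (Rmax_r (norm n x) (norm n y)).
  assert (Hm' : 1 < Rmin (norm n x) (norm n y)) by (apply Rmin_glb_lt; assumption).
  set (R := Rmax (norm n x) (norm n y) + 3 * dist n x y).
  destruct (qh_length_sphere_chord_near n x y R) as [w [Hw Hw27]];
    [lra | lra | unfold R; lra | unfold R; lra |].
  exists (ln ((R - 1) / (norm n x - 1)) + w + ln ((R - 1) / (norm n y - 1))). split.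
  - apply qh_length_via_sphere; [unfold R; lra | unfold R; lra | exact Hw].
  - set (m := Rmin (norm n x) (norm n y) - 1) in *.
    assert (Ha : ln ((R - 1) / (norm n x - 1)) <= ln 4 + ln (1 + dist n x y / m))
      by (apply ln_radial_le; unfold R, m in *; lra).
    assert (Hb : ln ((R - 1) / (norm n y - 1)) <= ln 4 + ln (1 + dist n x y / m))
      by (apply ln_radial_le; unfold R, m in *; lra).
    assert (HJ : ln 2 <= ln (1 + dist n x y / m)).
    { assert (1 <= dist n x y / m) by (apply Rmult_le_reg_r with m; [unfold m; lra |];
        unfold Rdiv; rewrite Rmult_assoc, Rinv_l; unfold m in *; lra).
      apply ln_le; lra. }
    replace 4 with (2 * 2) in Ha, Hb by ring. rewrite ln_mult in Ha, Hb by lra.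
    pose proof ln2_bounds. lra.
Qed.

Lemma chord_pair_le R r0 B : 2 <= r0 <= R -> 4 < B -> B * (14143 / 10000) <= (B - 4) * r0 ->
  4 * R / (R - sqrt 2) <= B.
Proof.
  intros HR HB Hr0. pose proof sqrt2_le.
  assert (sqrt 2 * B <= 14143 / 10000 * B) by (apply Rmult_le_compat_r; lra).
  assert ((B - 4) * r0 <= (B - 4) * R) by (apply Rmult_le_compat_l; lra).
  apply Rmult_le_reg_r with (R - sqrt 2); [lra |].
  replace (4 * R / (R - sqrt 2) * (R - sqrt 2)) with (4 * R) by (field; lra). lra.
Qed.

(* A large [m] makes [R] large and the chords short; a small [m] makes [J] large. *)
Lemma far_chords_le m R J : 0 < m -> 2 * (1 + m) <= R -> ln (2 + / m) <= J ->
  2 * ln 2 + 4 * R / (R - sqrt 2) <= 93 / 10 * J.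
Proof.
  intros Hm HR HJ. pose proof ln2_bounds; pose proof ln3_bounds; pose proof ln_7_3_ge.
  assert (Hinv : forall k, 0 < k -> m <= k -> ln (2 + / k) <= J).
  { intros k Hk Hmk. apply Rle_trans with (ln (2 + / m)); [| exact HJ].
    pose proof (Rinv_0_lt_compat k Hk). pose proof (Rinv_le_contravar m k Hm Hmk).
    apply ln_le; lra. }
  destruct (Rle_dec 3 m).
  { assert (ln 2 <= J).
    { apply Rle_trans with (ln (2 + / m)); [| exact HJ].
      pose proof (Rinv_0_lt_compat m Hm). apply ln_le; lra. }
    pose proof (chord_pair_le R 8 (487 / 100) ltac:(lra) ltac:(lra) ltac:(lra)). lra. }
  destruct (Rle_dec 1 m).
  { pose proof (Hinv 3 ltac:(lra) ltac:(lra)). replace (2 + / 3) with (7 / 3) in * by field.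
    pose proof (chord_pair_le R 4 (62 / 10) ltac:(lra) ltac:(lra) ltac:(lra)). lra. }
  destruct (Rle_dec (1 / 2) m).
  { pose proof (Hinv 1 ltac:(lra) ltac:(lra)). replace (2 + / 1) with 3 in * by field.
    pose proof (chord_pair_le R 3 (76 / 10) ltac:(lra) ltac:(lra) ltac:(lra)). lra. }
  destruct (Rle_dec (1 / 4) m).
  { pose proof (Hinv (1 / 2) ltac:(lra) ltac:(lra)).
    replace (2 + / (1 / 2)) with (2 * 2) in * by field. rewrite ln_mult in * by lra.
    pose proof (chord_pair_le R (5 / 2) (93 / 10) ltac:(lra) ltac:(lra) ltac:(lra)). lra. }
  pose proof (Hinv (1 / 4) ltac:(lra) ltac:(lra)).
  replace (2 + / (1 / 4)) with (2 * 3) in * by field. rewrite ln_mult in * by lra.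
  pose proof (chord_pair_le R 2 14 ltac:(lra) ltac:(lra) ltac:(lra)). lra.
Qed.

Lemma qh_length_le_far n x y : (2 <= n)%nat -> 1 < norm n x -> 1 < norm n y ->
  Rmin (norm n x) (norm n y) < dist n x y ->
  exists v, qh_length n x y v /\ v <= 113 / 10 * j_ext n x y.
Proof.
  intros Hn Hx Hy Hd. unfold j_ext.
  pose proof (Rmax_le_Rmin_add _ _ _ (Rabs_norm_sub_le_dist n x y)).
  pose proof (Rmin_l (norm n x) (norm n y)); pose proof (Rmin_r (norm n x) (norm n y)).
  pose proof (Rmax_l (norm n x) (norm n y)); pose proof (Rmax_r (norm n x) (norm n y)).
  set (a := norm n x) in *; set (b := norm n y) in *; set (d := dist n x y) in *.
  set (m' := Rmin a b) in *; set (M := Rmax a b) in *.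
  assert (Hm' : 1 < m') by (apply Rmin_glb_lt; assumption).
  set (R := M + d).
  assert (Hp : norm n (unit_dir n x) = 1) by (apply norm_unit_dir; fold a; lra).
  assert (Hq : norm n (unit_dir n y) = 1) by (apply norm_unit_dir; fold b; lra).
  destruct (exists_unit_between n _ _ Hn Hp Hq) as [u [Hu [Hpu Huq]]].
  assert (HR : sqrt 2 < R) by (pose proof sqrt2_le; unfold R; lra).
  destruct (qh_length_sphere_chord_wide n _ _ R Hp Hu Hpu HR) as [w1 [Hw1 Hw1le]].
  destruct (qh_length_sphere_chord_wide n _ _ R Hu Hq Huq HR) as [w2 [Hw2 Hw2le]].
  exists (ln ((R - 1) / (a - 1)) + (w1 + w2) + ln ((R - 1) / (b - 1))). split.
  - apply qh_length_via_sphere; [fold a; unfold R; lra | fold b; unfold R; lra |].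
    apply qh_length_concat with (scale R u); assumption.
  - assert (Ha : ln ((R - 1) / (a - 1)) <= ln 2 + ln (1 + d / (m' - 1)))
      by (apply ln_radial_le; unfold R in *; lra).
    assert (Hb : ln ((R - 1) / (b - 1)) <= ln 2 + ln (1 + d / (m' - 1)))
      by (apply ln_radial_le; unfold R in *; lra).
    assert (HJ : ln (2 + / (m' - 1)) <= ln (1 + d / (m' - 1))).
    { assert (0 < / (m' - 1)) by (apply Rinv_0_lt_compat; lra).
      apply ln_le; [lra |].
      replace (2 + / (m' - 1)) with (1 + m' / (m' - 1)) by (field; lra).
      apply Rplus_le_compat_l. unfold Rdiv. apply Rmult_le_compat_r; lra. }
    pose proof (far_chords_le (m' - 1) R _ ltac:(lra) ltac:(unfold R; lra) HJ).
    replace (4 * R / (R - sqrt 2)) with (2 * R / (R - sqrt 2) + 2 * R / (R - sqrt 2)) in *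
      by (field; lra).
    lra.
Qed.

Lemma qh_length_le_j n x y eps : (2 <= n)%nat -> 1 < norm n x -> 1 < norm n y -> 0 < eps ->
  exists v, qh_length n x y v /\ v <= 113 / 10 * j_ext n x y + eps.
Proof.
  intros Hn Hx Hy He. pose proof (j_ext_ge0 n x y Hx Hy).
  destruct (Rle_dec (dist n x y) (Rmin (norm n x) (norm n y) - 1)).
  { destruct (qh_length_le_close n x y eps) as [v [Hv Hvle]]; auto.
    exists v. split; [exact Hv | lra]. }
  destruct (Rle_dec (dist n x y) (Rmin (norm n x) (norm n y))).
  { destruct (qh_length_le_mid n x y) as [v [Hv Hvle]]; auto; [lra |].
    exists v. split; [exact Hv | lra]. }
  destruct (qh_length_le_far n x y) as [v [Hv Hvle]]; auto; [lra |].
  exists v. split; [exact Hv | lra].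
Qed.

Lemma kG_ext_ball_le n x y : (2 <= n)%nat -> ext_ball n x -> ext_ball n y ->
  kG n (ext_ball n) x y <= 113 / 10 * jG n (ext_ball n) x y.
Proof.
  intros Hn Hx Hy. rewrite kG_ext_ball, jG_ext_ball by assumption.
  apply Inf_le_approx; [exists 0; apply qh_length_ge0 |].
  intros eps He. apply qh_length_le_j; assumption.
Qed.

Lemma le_4PI_div_ln3 : 113 / 10 <= 4 * PI / ln 3.
Proof.
  pose proof PI_ge_314; pose proof ln3_bounds.
  apply Rmult_le_reg_r with (ln 3); [lra |].
  replace (4 * PI / ln 3 * ln 3) with (4 * PI) by (field; lra). nra.
Qed.

Lemma unif_const_ext_ball n : (2 <= n)%nat -> unif_const n (ext_ball n) (4 * PI / ln 3).
Proof.
  intros Hn. pose proof le_4PI_div_ln3. split; [lra |].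
  intros x y Hx Hy. eapply Rle_trans; [apply kG_ext_ball_le; assumption |].
  apply Rmult_le_compat_r; [| assumption].
  rewrite jG_ext_ball by assumption. apply j_ext_ge0; assumption.
Qed.

(** * Lower bound *)

Lemma angle_antipodal n r : (1 <= n)%nat -> 0 < r ->
  angle n (scale r basis0) (scale (- r) basis0) = PI.
Proof.
  intros Hn Hr. unfold angle, cos_angle.
  rewrite !norm_scale_basis0, inner_scale_l, inner_scale_r, Rabs_Ropp, Rabs_pos_eq by (lia || lra).
  rewrite <- norm_sq, norm_basis0 by lia.
  replace (r * (- r * 1 ^ 2) / (r * r)) with (Ropp 1) by (field; lra).
  rewrite acos_opp, acos_1. ring.
Qed.

Lemma kG_antipodal_ge n r : (2 <= n)%nat -> 1 < r ->
  PI <= kG n (ext_ball n) (scale r basis0) (scale (- r) basis0).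
Proof.
  intros Hn Hr.
  assert (Hx : 1 < norm n (scale r basis0))
    by (rewrite norm_scale_basis0, Rabs_pos_eq by (lia || lra); lra).
  assert (Hy : 1 < norm n (scale (- r) basis0))
    by (rewrite norm_scale_basis0, Rabs_Ropp, Rabs_pos_eq by (lia || lra); lra).
  rewrite kG_ext_ball. apply Inf_ge.
  - destruct (qh_length_le_j n _ _ 1 Hn Hx Hy ltac:(lra)) as [v [Hv _]]. exists v. exact Hv.
  - intros v Hv. rewrite <- (angle_antipodal n r) by (lia || lra).
    apply qh_length_ge_angle, Hv.
Qed.

Lemma jG_antipodal n r : (2 <= n)%nat -> 1 < r ->
  jG n (ext_ball n) (scale r basis0) (scale (- r) basis0) = ln (1 + 2 * r / (r - 1)).
Proof.
  intros Hn Hr. unfold jG. rewrite !dG_ext_ball; unfold ext_ball;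
    rewrite ?norm_scale_basis0, ?Rabs_Ropp, ?Rabs_pos_eq by (lia || lra); try lra.
  rewrite Rmin_left by lra. do 3 f_equal.
  unfold dist.
  replace (fun i => scale r basis0 i - scale (- r) basis0 i) with (scale (2 * r) basis0)
    by (unfold scale; extensionality i; ring).
  rewrite norm_scale_basis0, Rabs_pos_eq by (lia || lra). reflexivity.
Qed.

(* As [r] grows, [ln (1 + 2r/(r-1))] decreases to [ln 3]. *)
Lemma le_mul_ln3 A c : 1 <= A -> (forall r, 1 < r -> c <= A * ln (1 + 2 * r / (r - 1))) ->
  c <= A * ln 3.
Proof.
  intros HA Hr. destruct (Rle_dec c (A * ln 3)) as [Hle | Hgt]; [exact Hle | exfalso].
  set (e := c - A * ln 3). assert (He : 0 < e) by (unfold e; lra).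
  set (r := 1 + 2 * A / e).
  assert (Hr1 : 1 < r) by (unfold r; assert (0 < 2 * A / e) by (apply Rdiv_lt_0_compat; lra); lra).
  specialize (Hr r Hr1).
  assert (Hq : 0 <= e / (3 * A)) by (apply Rdiv_le_0_compat; lra).
  replace (1 + 2 * r / (r - 1)) with (3 * (1 + e / (3 * A))) in Hr by (unfold r; field; lra).
  rewrite ln_mult in Hr by lra.
  assert (Hln : ln (1 + e / (3 * A)) <= e / (3 * A)).
  { rewrite <- (ln_exp (e / (3 * A))) at 2. apply ln_le; [lra | apply exp_ineq1_le]. }
  assert (A * ln (1 + e / (3 * A)) <= e / 3).
  { replace (e / 3) with (A * (e / (3 * A))) by (field; lra). apply Rmult_le_compat_l; lra. }
  unfold e in *. lra.
Qed.

Lemma unif_const_ext_ball_ge n A : (2 <= n)%nat -> unif_const n (ext_ball n) A -> PI / ln 3 <= A.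
Proof.
  intros Hn [HA Hunif]. pose proof ln3_bounds.
  assert (PI <= A * ln 3).
  { apply le_mul_ln3; [exact HA |]. intros r Hr.
    rewrite <- (jG_antipodal n r) by assumption.
    apply Rle_trans with (kG n (ext_ball n) (scale r basis0) (scale (- r) basis0));
      [apply kG_antipodal_ge; assumption |].
    apply Hunif; unfold ext_ball;
      rewrite norm_scale_basis0, ?Rabs_Ropp, Rabs_pos_eq by (lia || lra); lra. }
  apply Rmult_le_reg_r with (ln 3); [lra |].
  replace (PI / ln 3 * ln 3) with PI by (field; lra). exact H0.
Qed.

Theorem mainTheorem18 (n : nat) (hn : (2 <= n)%nat) :
  uniform n (ext_ball n) /\
  PI / ln 3 <= AG n (ext_ball n) /\ AG n (ext_ball n) <= 4 * PI / ln 3.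
Proof.
  pose proof (unif_const_ext_ball n hn) as Hupper.
  split; [exists (4 * PI / ln 3); exact Hupper |]. unfold AG. split.
  - apply Inf_ge; [eauto |]. intros A HA. apply (unif_const_ext_ball_ge n); assumption.
  - apply Inf_le; [exists 1; intros A [HA _]; exact HA | exact Hupper].
Qed.
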